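(* Let $b\in\{0,1\}^d$ and let $q$ be the simple gradient associated with $b$. Then $H_{\bar b}(q)=0$ (equivalently $N_{\bar b}(q)=1$) for every bitmap $\bar b\ge b$.
   Context: Jackson network with a tree topology on nodes $\{1,\dots,d\}$, root node $1$; $i\to j$ means node $j$ is a child of node $i$. Customers arrive from outside only at node $1$, with rate $\lambda>0$. For $i\to j$, $\mu_{i,j}>0$ is the rate at which node $i$ serves customers and sends them to node $j$; $\mu_{i,0}\ge 0$ is the rate at which node $i$ serves customers who then leave the system. Let $\mu_i=\sum_{k:i\to k}\mu_{i,k}+\mu_{i,0}>0$. Arrival rates: $\Lambda_1=\lambda$ and $\Lambda_j=\Lambda_i\mu_{i,j}/\mu_i$ if $i\to j$. Utilities $\rho_i=\Lambda_i/\mu_i$, assumed to satisfy $\max_i\rho_i<1$; also $\lambda+\sum_i\mu_i=1$. Let $\mu'_{i,0}=\Lambda_i\mu_{i,0}/\mu_i$. A bitmap $b\in\{0,1\}^d$ encodes which nodes are nonempty ($b(i)=1$) or empty ($b(i)=0$); $b'\ge b$ means $b'(i)\ge b(i)$ for all $i$. For a bitmap $b$ and $q\in\mathbb{R}^d$: $N_b(q)=\lambda e^{-q(1)/2}+\sum_{i:b(i)=1}\sum_{j:i\to j}\mu_{i,j}e^{(q(i)-q(j))/2}+\sum_{i:b(i)=1}\mu_{i,0}e^{q(i)/2}+\sum_{i:b(i)=0}\mu_i$, and $H_b(q)=-2\log N_b(q)$. Simple rates: $m_i(b)=\mu_i$ if $b(i)=1$, and $m_i(b)=\sum_{k:i\to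 k}m_k(b)+\mu'_{i,0}$ if $b(i)=0$ (recursively from the leaves). The simple gradient of $b$ is $q$ with $q(i)=2\log(\Lambda_i/m_i(b))$. *)

From Stdlib Require Import Reals List Arith Lia Lra.
Import ListNotations.
Open Scope R_scope.

Definition sumR (l : list nat) (f : nat -> R) : R :=
  fold_right Rplus 0 (map f l).

Definition nodes (d : nat) : list nat := seq 1 d.

(* The tree is given by a parent function [par] on nodes 2..d (node 1 is the
   root).  Edge i -> j  iff  2 <= j <= d and par j = i. *)
Definition children (d : nat) (par : nat -> nat) (i : nat) : list nat :=
  filter (fun k => Nat.eqb (par k) i) (seq 2 (d - 1)).

Definition is_edge (d : nat) (par : nat -> nat) (i j : nat) : Prop :=
  (2 <= j <= d)%nat /\ par j = i.

Definition rooted_tree (d : nat) (par : nat -> nat) : Prop :=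
  (1 <= d)%nat /\
  (forall j, (2 <= j <= d)%nat -> (1 <= par j <= d)%nat) /\
  (forall i, (1 <= i <= d)%nat -> exists n, Nat.iter n par i = 1%nat).

Definition mu_tot (d : nat) (par : nat -> nat) (mu : nat -> nat -> R)
  (mu0 : nat -> R) (i : nat) : R :=
  sumR (children d par i) (fun k => mu i k) + mu0 i.

(* Arrival rates Lambda, defined along the path from the root
   (fuel-based recursion; fuel d suffices since depth < d). *)
Fixpoint Lam_fuel (fuel : nat) (par : nat -> nat) (lam : R)
  (mu : nat -> nat -> R) (mut : nat -> R) (j : nat) : R :=
  if Nat.eqb j 1 then lam else
  match fuel with
  | O => 0
  | S f => Lam_fuel f par lam mu mut (par j) * mu (par j) j / mut (par j)
  end.

Definition Lam (d : nat) (par : nat -> nat) (lam : R)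
  (mu : nat -> nat -> R) (mu0 : nat -> R) (j : nat) : R :=
  Lam_fuel d par lam mu (mu_tot d par mu mu0) j.

Definition rho (d : nat) (par : nat -> nat) (lam : R)
  (mu : nat -> nat -> R) (mu0 : nat -> R) (i : nat) : R :=
  Lam d par lam mu mu0 i / mu_tot d par mu mu0 i.

Definition mu0' (d : nat) (par : nat -> nat) (lam : R)
  (mu : nat -> nat -> R) (mu0 : nat -> R) (i : nat) : R :=
  Lam d par lam mu mu0 i * mu0 i / mu_tot d par mu mu0 i.

(* Bitmaps: b i = true means node i nonempty. *)
Definition bitmap := nat -> bool.

Definition bitmap_ge (d : nat) (b' b : bitmap) : Prop :=
  forall i, (1 <= i <= d)%nat -> b i = true -> b' i = true.

(* Simple rates m_i(b), recursively from the leaves (fuel d suffices). *)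
Fixpoint m_fuel (fuel : nat) (d : nat) (par : nat -> nat)
  (mut : nat -> R) (mu0p : nat -> R) (b : bitmap) (i : nat) : R :=
  if b i then mut i else
  match fuel with
  | O => mu0p i
  | S f => sumR (children d par i) (fun k => m_fuel f d par mut mu0p b k) + mu0p i
  end.

Definition m_rate (d : nat) (par : nat -> nat) (lam : R)
  (mu : nat -> nat -> R) (mu0 : nat -> R) (b : bitmap) (i : nat) : R :=
  m_fuel d d par (mu_tot d par mu mu0) (mu0' d par lam mu mu0) b i.

Definition simple_gradient (d : nat) (par : nat -> nat) (lam : R)
  (mu : nat -> nat -> R) (mu0 : nat -> R) (b : bitmap) : nat -> R :=
  fun i => 2 * ln (Lam d par lam mu mu0 i / m_rate d par lam mu mu0 b i).

Definition N_b (d : nat) (par : nat -> nat) (lam : R)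
  (mu : nat -> nat -> R) (mu0 : nat -> R) (b : bitmap) (q : nat -> R) : R :=
  lam * exp (- q 1%nat / 2)
  + sumR (nodes d) (fun i => if b i then
        sumR (children d par i) (fun j => mu i j * exp ((q i - q j) / 2))
      else 0)
  + sumR (nodes d) (fun i => if b i then mu0 i * exp (q i / 2) else 0)
  + sumR (nodes d) (fun i => if b i then 0 else mu_tot d par mu mu0 i).

Definition H_b (d : nat) (par : nat -> nat) (lam : R)
  (mu : nat -> nat -> R) (mu0 : nat -> R) (b : bitmap) (q : nat -> R) : R :=
  -2 * ln (N_b d par lam mu mu0 b q).

From Stdlib Require Import Reals List Arith Lia Lra Wf_nat.
Import ListNotations.
Open Scope R_scope.

(* Let Λ be the arrival rates, μ the total service rates, m = m(b) the simple
   rates and q the simple gradient of b, so that e^{q(i)/2} = Λ_i / m_i.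
   Since Λ_j μ_i = Λ_i μ_{i,j} on every edge i -> j, the terms of N_{b̄}(q)
   simplify to  μ_{i,j} e^{(q(i)-q(j))/2} = μ_i m_j / m_i  and
   μ_{i,0} e^{q(i)/2} = μ_i μ'_{i,0} / m_i.  As b̄ >= b, a node with b̄(i) = 1
   has either m_i = μ_i or m_i = Σ_{i->j} m_j + μ'_{i,0}, and in every case
   node i contributes  μ_i + (Σ_{i->j} m_j + μ'_{i,0} - m_i)  to N_{b̄}(q).
   Summed over the tree the m_j telescope to -m_1, flow conservation gives
   Σ_i μ'_{i,0} = λ, and the root term λ e^{-q(1)/2} is m_1; hence
   N_{b̄}(q) = λ + Σ_i μ_i = 1.
   The file first develops finite sums and a double-counting lemma, then the
   depth of a node (bounded by d), which makes the fuel-based definitions of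
   Λ and m satisfy their defining recursions; then positivity, flow
   conservation and the per-node identity; the theorem comes last. *)

Lemma sumR_cons (x : nat) (l : list nat) (f : nat -> R) :
  sumR (x :: l) f = f x + sumR l f.
Proof. reflexivity. Qed.

Lemma sumR_ext (l : list nat) (f g : nat -> R) :
  (forall x, In x l -> f x = g x) -> sumR l f = sumR l g.
Proof.
  intros H. unfold sumR. f_equal. apply map_ext_in. exact H.
Qed.

Lemma sumR_plus (l : list nat) (f g : nat -> R) :
  sumR l (fun x => f x + g x) = sumR l f + sumR l g.
Proof. induction l as [|a l IH]; unfold sumR in *; simpl; [lra|]. rewrite IH. lra. Qed.

Lemma sumR_minus (l : list nat) (f g : nat -> R) :
  sumR l (fun x => f x - g x) = sumR l f - sumR l g.
Proof. induction l as [|a l IH]; unfold sumR in *; simpl; [lra|]. rewrite IH. lra. Qed.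

Lemma sumR_scal (l : list nat) (c : R) (f : nat -> R) :
  sumR l (fun x => c * f x) = c * sumR l f.
Proof. induction l as [|a l IH]; unfold sumR in *; simpl; [lra|]. rewrite IH. lra. Qed.

Lemma sumR_zero (l : list nat) : sumR l (fun _ => 0) = 0.
Proof. induction l as [|a l IH]; unfold sumR in *; simpl; [lra|]. rewrite IH. lra. Qed.

Lemma sumR_nonneg (l : list nat) (f : nat -> R) :
  (forall x, In x l -> 0 <= f x) -> 0 <= sumR l f.
Proof.
  induction l as [|a l IH]; intros H; unfold sumR in *; simpl; [lra|].
  pose proof (H a (or_introl eq_refl)).
  assert (0 <= fold_right Rplus 0 (map f l)) by (apply IH; intros; apply H; now right).
  lra.
Qed.

Lemma sumR_pos (l : list nat) (f : nat -> R) :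
  l <> [] -> (forall x, In x l -> 0 < f x) -> 0 < sumR l f.
Proof.
  intros Hne H. destruct l as [|a l]; [congruence|].
  change (0 < f a + sumR l f).
  pose proof (H a (or_introl eq_refl)).
  assert (0 <= sumR l f) by (apply sumR_nonneg; intros; left; apply H; now right).
  lra.
Qed.

Lemma sumR_indicator (I : list nat) (x : nat) (c : R) :
  NoDup I -> In x I -> sumR I (fun i => if Nat.eqb x i then c else 0) = c.
Proof.
  induction I as [|a I IH]; intros Hnd Hin; [destruct Hin|].
  inversion Hnd as [|? ? Ha HI]; subst. rewrite sumR_cons.
  destruct (Nat.eqb_spec x a) as [->|Hxa].
  - rewrite (sumR_ext _ _ (fun _ => 0)), sumR_zero; [lra|].
    intros y Hy. destruct (Nat.eqb_spec a y); congruence.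
  - destruct Hin as [->|Hin]; [congruence|]. rewrite IH; auto. lra.
Qed.

Lemma double_count (par : nat -> nat) (I L : list nat) (F : nat -> R) :
  NoDup I -> (forall k, In k L -> In (par k) I) ->
  sumR I (fun i => sumR (filter (fun k => Nat.eqb (par k) i) L) F) = sumR L F.
Proof.
  intros HI. induction L as [|k L IH]; intros HL; [apply sumR_zero|].
  rewrite (sumR_ext _ _ (fun i => (if Nat.eqb (par k) i then F k else 0) +
      sumR (filter (fun k => Nat.eqb (par k) i) L) F)).
  - rewrite sumR_plus, sumR_indicator, IH; auto.
    + intros; apply HL; now right.
    + apply HL; now left.
  - intros i _. simpl. destruct (Nat.eqb (par k) i); rewrite ?sumR_cons; lra.
Qed.

Definition depth (par : nat -> nat) (i n : nat) : Prop :=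
  Nat.iter n par i = 1%nat /\ forall m, (m < n)%nat -> Nat.iter m par i <> 1%nat.

Lemma depth_exists (par : nat -> nat) (i n : nat) :
  Nat.iter n par i = 1%nat -> exists k, depth par i k.
Proof.
  intros Hn.
  destruct (dec_inh_nat_subset_has_unique_least_element
              (fun k => Nat.iter k par i = 1%nat)) as [k [[Hk Hmin] _]].
  - intros k. destruct (Nat.eq_dec (Nat.iter k par i) 1); tauto.
  - now exists n.
  - exists k. split; [exact Hk|]. intros m Hm Hm1. specialize (Hmin m Hm1). lia.
Qed.

Lemma depth_child (par : nat -> nat) (i j n : nat) :
  depth par i n -> par j = i -> j <> 1%nat -> depth par j (S n).
Proof.
  intros [H1 H2] Hp Hj. split.
  - now rewrite Nat.iter_succ_r, Hp.
  - intros [|m] Hm; [exact Hj|]. rewrite Nat.iter_succ_r, Hp. apply H2. lia.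
Qed.

Section DepthBound.

Variables (d : nat) (par : nat -> nat).
Hypothesis Hpar : forall j, (2 <= j <= d)%nat -> (1 <= par j <= d)%nat.

Lemma iterates_in_range (i n : nat) :
  (1 <= i <= d)%nat -> depth par i n ->
  forall m, (m <= n)%nat -> (1 <= Nat.iter m par i <= d)%nat.
Proof.
  intros Hi [_ Hne] m. induction m as [|m IH]; intros Hm; [exact Hi|].
  simpl. apply Hpar. pose proof (Hne m ltac:(lia)). specialize (IH ltac:(lia)). lia.
Qed.

(* Before reaching the root the path visits no node twice, since otherwise
   the root would be reached earlier. *)
Lemma iterates_injective (i n a b : nat) :
  depth par i n -> (a <= n)%nat -> (b <= n)%nat ->
  Nat.iter a par i = Nat.iter b par i -> a = b.
Proof.
  intros [Hroot Hne].
  assert (Hshift : forall a b, (a < b <= n)%nat ->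
            Nat.iter a par i <> Nat.iter b par i).
  { intros a' b' Hab E. apply (Hne (n - b' + a')%nat); [lia|].
    rewrite Nat.iter_add, E, <- Nat.iter_add.
    now replace (n - b' + b')%nat with n by lia. }
  intros Ha Hb E. destruct (Nat.lt_trichotomy a b) as [h|[h|h]]; auto.
  - exfalso. exact (Hshift a b ltac:(lia) E).
  - exfalso. exact (Hshift b a ltac:(lia) (eq_sym E)).
Qed.

(* Pigeonhole: the n+1 distinct nodes of the path lie in {1..d}. *)
Lemma depth_lt (i n : nat) : (1 <= i <= d)%nat -> depth par i n -> (n < d)%nat.
Proof.
  intros Hi Hd.
  set (path := map (fun m => Nat.iter m par i) (seq 0 (S n))).
  assert (Hnd : NoDup path).
  { apply NoDup_map_NoDup_ForallPairs; [|apply seq_NoDup].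
    intros a b Ha Hb E. apply in_seq in Ha, Hb.
    apply (iterates_injective i n); auto; lia. }
  assert (Hincl : incl path (seq 1 d)).
  { intros x Hx. apply in_map_iff in Hx. destruct Hx as [m [<- Hm]].
    apply in_seq in Hm. apply in_seq.
    pose proof (iterates_in_range i n Hi Hd m ltac:(lia)). lia. }
  pose proof (NoDup_incl_length Hnd Hincl) as Hlen.
  unfold path in Hlen. rewrite length_map, !length_seq in Hlen. lia.
Qed.

End DepthBound.

Lemma Lam_fuel_stable (par : nat -> nat) (lam : R) (mu : nat -> nat -> R)
  (mut : nat -> R) (j n f : nat) :
  Nat.iter n par j = 1%nat -> (n <= f)%nat ->
  Lam_fuel f par lam mu mut j = Lam_fuel n par lam mu mut j.
Proof.
  revert j f. induction n as [|n IH]; intros j f Hroot Hf.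
  - simpl in Hroot. subst j. destruct f; reflexivity.
  - destruct f as [|f]; [lia|]. cbn [Lam_fuel].
    destruct (Nat.eqb j 1); [reflexivity|].
    rewrite Nat.iter_succ_r in Hroot. rewrite (IH (par j) f); auto. lia.
Qed.

(* m_fuel at a node of depth n only needs fuel d - n, since no node has
   depth d or more. *)
Lemma m_fuel_stable (d : nat) (par : nat -> nat) (mut mu0p : nat -> R) (b : bitmap) :
  rooted_tree d par ->
  forall k i n f, (1 <= i <= d)%nat -> depth par i n -> (d <= n + k)%nat ->
  (k <= f)%nat -> m_fuel f d par mut mu0p b i = m_fuel k d par mut mu0p b i.
Proof.
  intros [_ [Hpar _]] k. induction k as [|k IH]; intros i n f Hi Hd Hk Hf.
  - pose proof (depth_lt d par Hpar i n Hi Hd). lia.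
  - destruct f as [|f]; [lia|]. cbn [m_fuel]. destruct (b i); [reflexivity|].
    f_equal. apply sumR_ext. intros j Hj.
    unfold children in Hj. apply filter_In in Hj as [Hj Hpj].
    apply in_seq in Hj. apply Nat.eqb_eq in Hpj.
    apply (IH j (S n)); try lia. apply (depth_child par i); auto. lia.
Qed.

Section TreeNetwork.

Variables (d : nat) (par : nat -> nat) (lam : R) (mu : nat -> nat -> R) (mu0 : nat -> R).
Hypothesis Htree : rooted_tree d par.
Hypothesis Hlam : 0 < lam.
Hypothesis Hmu : forall i j, is_edge d par i j -> 0 < mu i j.
Hypothesis Hmu0 : forall i, (1 <= i <= d)%nat -> 0 <= mu0 i.
Hypothesis Hmut : forall i, (1 <= i <= d)%nat -> 0 < mu_tot d par mu mu0 i.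

Local Notation Λ := (Lam d par lam mu mu0).
Local Notation μ := (mu_tot d par mu mu0).
Local Notation μ' := (mu0' d par lam mu mu0).
Local Notation ch := (children d par).

Lemma in_children (i j : nat) : In j (ch i) -> (2 <= j <= d)%nat /\ par j = i.
Proof.
  unfold children. intros Hj. apply filter_In in Hj as [Hj Hpj].
  apply in_seq in Hj. apply Nat.eqb_eq in Hpj. split; [lia|exact Hpj].
Qed.

Lemma Lam_root : Λ 1 = lam.
Proof. exact (Lam_fuel_stable par lam mu μ 1 0 d eq_refl (Nat.le_0_l d)). Qed.

Lemma Lam_edge (j : nat) : (2 <= j <= d)%nat -> Λ j = Λ (par j) * mu (par j) j / μ (par j).
Proof.
  destruct Htree as [_ [Hpar Hreach]]. intros Hj.
  assert (Hpj : (1 <= par j <= d)%nat) by (apply Hpar; lia).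
  destruct (Hreach _ Hpj) as [r Hr]. destruct (depth_exists par _ r Hr) as [n Hn].
  assert (Hnj : depth par j (S n)) by (apply (depth_child par (par j)); auto; lia).
  pose proof (depth_lt d par Hpar j (S n) ltac:(lia) Hnj).
  unfold Lam. rewrite (Lam_fuel_stable par lam mu μ j (S n) d (proj1 Hnj)) by lia.
  rewrite (Lam_fuel_stable par lam mu μ (par j) n d (proj1 Hn)) by lia.
  cbn [Lam_fuel]. destruct (Nat.eqb_spec j 1); [lia|reflexivity].
Qed.

Lemma Lam_pos (i : nat) : (1 <= i <= d)%nat -> 0 < Λ i.
Proof.
  destruct Htree as [_ [Hpar Hreach]]. intros Hi.
  destruct (Hreach i Hi) as [n Hn]. revert i Hi Hn.
  induction n as [|n IH]; intros i Hi Hn.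
  - simpl in Hn. subst i. now rewrite Lam_root.
  - destruct (Nat.eq_dec i 1) as [->|Hi1]; [now rewrite Lam_root|].
    assert (Hpi : (1 <= par i <= d)%nat) by (apply Hpar; lia).
    rewrite Lam_edge by lia.
    pose proof (IH (par i) Hpi ltac:(now rewrite <- Nat.iter_succ_r)).
    pose proof (Hmu (par i) i ltac:(split; [lia|reflexivity])).
    pose proof (Hmut (par i) Hpi).
    unfold Rdiv. apply Rmult_lt_0_compat; [nra|]. now apply Rinv_0_lt_compat.
Qed.

Lemma mu0'_nonneg (i : nat) : (1 <= i <= d)%nat -> 0 <= μ' i.
Proof.
  intros Hi. unfold mu0'. pose proof (Lam_pos i Hi). pose proof (Hmu0 i Hi).
  pose proof (Hmut i Hi). unfold Rdiv.
  apply Rmult_le_pos; [nra|]. left. now apply Rinv_0_lt_compat.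
Qed.

(* At a leaf every served customer leaves, so μ'_{i,0} = Λ_i. *)
Lemma mu0'_leaf (i : nat) : (1 <= i <= d)%nat -> ch i = [] -> μ' i = Λ i.
Proof.
  intros Hi Hleaf. pose proof (Hmut i Hi) as Hpos. unfold mu0'.
  assert (Hmt : μ i = mu0 i) by (unfold mu_tot; rewrite Hleaf; unfold sumR; simpl; lra).
  rewrite Hmt in *. field. lra.
Qed.

Lemma exit_rate_balance (i : nat) : (1 <= i <= d)%nat -> μ' i = Λ i - sumR (ch i) Λ.
Proof.
  intros Hi. pose proof (Hmut i Hi) as Hpos.
  rewrite (sumR_ext _ _ (fun j => Λ i / μ i * mu i j)).
  - rewrite sumR_scal. unfold mu0'.
    assert (Hmt : sumR (ch i) (mu i) = μ i - mu0 i) 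
      by (change (μ i) with (sumR (ch i) (mu i) + mu0 i); ring).
    rewrite Hmt. field. lra.
  - intros j Hj. destruct (in_children i j Hj) as [Hjr Hpj].
    rewrite Lam_edge, Hpj by exact Hjr. field. lra.
Qed.

Lemma nodes_split (F : nat -> R) : sumR (nodes d) F = F 1%nat + sumR (seq 2 (d - 1)) F.
Proof.
  destruct Htree as [Hd _]. unfold nodes.
  replace d with (S (d - 1)) at 1 by lia. reflexivity.
Qed.

(* Every non-root node is the child of exactly one node. *)
Lemma sum_over_children (F : nat -> R) :
  sumR (nodes d) (fun i => sumR (ch i) F) = sumR (seq 2 (d - 1)) F.
Proof.
  destruct Htree as [_ [Hpar _]]. apply double_count; [apply seq_NoDup|].
  intros k Hk. apply in_seq in Hk. apply in_seq. specialize (Hpar k ltac:(lia)). lia.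
Qed.

Lemma flow_conservation : sumR (nodes d) μ' = lam.
Proof.
  rewrite (sumR_ext _ _ (fun i => Λ i - sumR (ch i) Λ)).
  - rewrite sumR_minus, sum_over_children, nodes_split, Lam_root. lra.
  - intros i Hi. unfold nodes in Hi. apply in_seq in Hi.
    apply exit_rate_balance. lia.
Qed.

Variables (b bbar : bitmap).
Hypothesis Hge : bitmap_ge d bbar b.

Local Notation m := (m_rate d par lam mu mu0 b).
Local Notation q := (simple_gradient d par lam mu mu0 b).

Lemma m_full (i : nat) : b i = true -> m i = μ i.
Proof.
  destruct Htree as [Hd _]. intros Hb. unfold m_rate.
  replace d with (S (d - 1)) at 1 by lia. cbn [m_fuel]. now rewrite Hb.
Qed.

Lemma m_empty (i : nat) : (1 <= i <= d)%nat -> b i = false -> m i = sumR (ch i) m + μ' i.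
Proof.
  destruct Htree as [Hd [_ Hreach]]. intros Hi Hb.
  destruct (Hreach i Hi) as [r Hr]. destruct (depth_exists par i r Hr) as [n Hn].
  unfold m_rate. replace d with (S (d - 1)) at 1 by lia. cbn [m_fuel]. rewrite Hb.
  f_equal. apply sumR_ext. intros j Hj. destruct (in_children i j Hj) as [Hjr Hpj].
  assert (Hnj : depth par j (S n)) by (apply (depth_child par i); auto; lia).
  symmetry. apply (m_fuel_stable d par _ _ b Htree (d - 1) j (S n)); auto; lia.
Qed.

(* Positivity of m, by induction on the height d - depth of a node. *)
Lemma m_pos (i : nat) : (1 <= i <= d)%nat -> 0 < m i.
Proof.
  destruct Htree as [Hd [Hpar Hreach]].
  assert (Hheight : forall k j n, (1 <= j <= d)%nat -> depth par j n ->
            (d <= n + k)%nat -> 0 < m j).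
  { induction k as [|k IH]; intros j n Hj Hn Hk.
    - pose proof (depth_lt d par Hpar j n Hj Hn). lia.
    - destruct (b j) eqn:Hb; [rewrite m_full by exact Hb; now apply Hmut|].
      rewrite m_empty by assumption.
      destruct (ch j) as [|c cs] eqn:Hch.
      + rewrite mu0'_leaf by assumption. unfold sumR; simpl.
        pose proof (Lam_pos j Hj). lra.
      + assert (0 < sumR (c :: cs) m).
        { apply sumR_pos; [congruence|]. intros l Hl. rewrite <- Hch in Hl.
          destruct (in_children j l Hl) as [Hlr Hpl].
          apply (IH l (S n)); [lia| |lia].
          apply (depth_child par j); auto; lia. }
        pose proof (mu0'_nonneg j Hj). lra. }
  intros Hi. destruct (Hreach i Hi) as [r Hr].
  destruct (depth_exists par i r Hr) as [n Hn].
  apply (Hheight d i n); auto; lia.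
Qed.

Lemma exp_half_gradient (i : nat) : (1 <= i <= d)%nat -> exp (q i / 2) = Λ i / m i.
Proof.
  intros Hi. unfold simple_gradient.
  replace (2 * ln (Λ i / m i) / 2) with (ln (Λ i / m i)) by field.
  apply exp_ln. pose proof (Lam_pos i Hi). pose proof (m_pos i Hi).
  unfold Rdiv. apply Rmult_lt_0_compat; [lra|]. now apply Rinv_0_lt_compat.
Qed.

(* Term of N for an edge i -> j, using Λ_j μ_i = Λ_i μ_{i,j}. *)
Lemma edge_term (i j : nat) : (1 <= i <= d)%nat -> In j (ch i) ->
  mu i j * exp ((q i - q j) / 2) = μ i * m j / m i.
Proof.
  intros Hi Hj. destruct (in_children i j Hj) as [Hjr Hpj].
  replace ((q i - q j) / 2) with (q i / 2 + - (q j / 2)) by field.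
  rewrite exp_plus, exp_Ropp, !exp_half_gradient by lia.
  rewrite (Lam_edge j Hjr), Hpj.
  pose proof (Hmu i j (conj Hjr Hpj)). pose proof (Lam_pos i Hi).
  pose proof (m_pos i Hi). pose proof (m_pos j ltac:(lia)). pose proof (Hmut i Hi).
  field. repeat split; lra.
Qed.

Lemma exit_term (i : nat) : (1 <= i <= d)%nat ->
  mu0 i * exp (q i / 2) = μ i * μ' i / m i.
Proof.
  intros Hi. rewrite exp_half_gradient by exact Hi. unfold mu0'.
  pose proof (m_pos i Hi). pose proof (Hmut i Hi). field. lra.
Qed.

Lemma root_term : lam * exp (- q 1%nat / 2) = m 1%nat.
Proof.
  destruct Htree as [Hd _].
  replace (- q 1%nat / 2) with (- (q 1%nat / 2)) by field.
  rewrite exp_Ropp, exp_half_gradient, Lam_root by lia.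
  pose proof (m_pos 1 ltac:(lia)). field. lra.
Qed.

Lemma node_contribution (i : nat) : (1 <= i <= d)%nat ->
  (if bbar i then sumR (ch i) (fun j => mu i j * exp ((q i - q j) / 2)) else 0)
  + (if bbar i then mu0 i * exp (q i / 2) else 0)
  + (if bbar i then 0 else μ i)
  = μ i + (sumR (ch i) m + μ' i - m i).
Proof.
  intros Hi. pose proof (m_pos i Hi).
  destruct (bbar i) eqn:Hbbar.
  - rewrite (sumR_ext _ _ (fun j => μ i / m i * m j)).
    2: { intros j Hj. rewrite edge_term by assumption. field. lra. }
    rewrite sumR_scal, exit_term by exact Hi.
    destruct (b i) eqn:Hb.
    + rewrite m_full by exact Hb. field. pose proof (Hmut i Hi). lra.
    + pose proof (m_empty i Hi Hb). field_simplify; [|lra].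
      replace (sumR (ch i) m) with (m i - μ' i) by lra. field. lra.
  - assert (Hb : b i = false).
    { destruct (b i) eqn:Hb; [|reflexivity].
      rewrite (Hge i Hi Hb) in Hbbar. discriminate. }
    pose proof (m_empty i Hi Hb). lra.
Qed.

(* Summing the node contributions: the m_j telescope and flow is conserved. *)
Lemma N_b_simple_gradient :
  lam + sumR (nodes d) μ = 1 -> N_b d par lam mu mu0 bbar q = 1.
Proof.
  intros Hnorm. unfold N_b.
  rewrite !Rplus_assoc, <- !sumR_plus.
  rewrite (sumR_ext _ _ (fun i => μ i + (sumR (ch i) m + μ' i - m i))).
  2: { intros i Hi. unfold nodes in Hi. apply in_seq in Hi.
       rewrite <- node_contribution by lia. ring. }
  rewrite root_term, sumR_plus, sumR_minus, sumR_plus.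
  rewrite sum_over_children, flow_conservation, (nodes_split m).
  lra.
Qed.

End TreeNetwork.

(* The theorem: H_{b̄}(q) = -2 log N_{b̄}(q) = -2 log 1 = 0. *)
Theorem mainTheorem2 (d : nat) (par : nat -> nat) (lam : R)
  (mu : nat -> nat -> R) (mu0 : nat -> R)
  (Htree : rooted_tree d par)
  (Hlam : 0 < lam)
  (Hmu : forall i j, is_edge d par i j -> 0 < mu i j)
  (Hmu0 : forall i, (1 <= i <= d)%nat -> 0 <= mu0 i)
  (Hmut : forall i, (1 <= i <= d)%nat -> 0 < mu_tot d par mu mu0 i)
  (Hrho : forall i, (1 <= i <= d)%nat -> rho d par lam mu mu0 i < 1)
  (Hnorm : lam + sumR (nodes d) (mu_tot d par mu mu0) = 1)
  (b bbar : bitmap)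
  (Hge : bitmap_ge d bbar b) :
  H_b d par lam mu mu0 bbar (simple_gradient d par lam mu mu0 b) = 0.
Proof.
  unfold H_b.
  rewrite (N_b_simple_gradient d par lam mu mu0 Htree Hlam Hmu Hmu0 Hmut b bbar Hge Hnorm).
  rewrite ln_1. ring.
Qed.
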